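(* Let $\mathcal M(n)$ denote the maximum number of edges of an edge-magic graph with $n$ vertices. Then $$\frac27\, n^2+O(n)\le \mathcal M(n)\le \left(0.489\ldots+o(1)\right) n^2 \qquad (n\to\infty),$$ where $0.489\ldots$ denotes the constant $\frac12-\frac{2}{(2+(1+2\sqrt2)\pi)^2}\approx 0.4898$.
   Context: For a positive integer $k$, $[k]=\{1,\dots,k\}$. Let $G$ be a finite simple graph with $n$ vertices and $m$ edges (with $V(G)\cap E(G)=\emptyset$). An edge-magic labelling of $G$ with magic sum $s$ is a bijection $l:V(G)\cup E(G)\to[m+n]$ such that $l(a)+l(b)+l(ab)=s$ for every edge $ab$ of $G$. The graph $G$ is edge-magic if it admits an edge-magic labelling for some $s$. *)

From mathcomp Require Import all_boot.
Set Implicit Arguments. Unset Strict Implicit. Unset Printing Implicit Defensive.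

Definition simple_graph (n : nat) (e : rel 'I_n) : Prop :=
  symmetric e /\ irreflexive e.

(* Edge set: each unordered edge {a,b} is represented once, as the pair (a,b)
   with a < b. *)
Definition edges (n : nat) (e : rel 'I_n) : {set 'I_n * 'I_n} :=
  [set p : 'I_n * 'I_n | (p.1 < p.2)%N && e p.1 p.2].

(* An edge-magic labelling with magic sum s: vertex labels lv, edge labels
   le (read on the representative pair (a,b), a < b), such that the combined
   map V(G) u E(G) -> [m+n] is a bijection (all labels in [1, m+n], injective,
   surjective) and l(a)+l(b)+l(ab) = s for every edge ab. *)
Definition edge_magic_labelling (n : nat) (e : rel 'I_n)
    (lv : 'I_n -> nat) (le : 'I_n -> 'I_n -> nat) (s : nat) : Prop :=
  let N := (#|edges e| + n)%N in
  (forall v, 1 <= lv v <= N) /\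
      (forall p, p \in edges e -> 1 <= le p.1 p.2 <= N) /\
      (forall v w, lv v = lv w -> v = w) /\
      (forall p q, p \in edges e -> q \in edges e ->
          le p.1 p.2 = le q.1 q.2 -> p = q) /\
      (forall v p, p \in edges e -> lv v <> le p.1 p.2) /\
      (forall k, 1 <= k <= N ->
          (exists v, lv v = k) \/ (exists2 p, p \in edges e & le p.1 p.2 = k)) /\
      (forall p, p \in edges e -> (lv p.1 + lv p.2 + le p.1 p.2)%N = s).

Definition edge_magic (n : nat) (e : rel 'I_n) : Prop :=
  exists lv le s, edge_magic_labelling e lv le s.

Definition is_max_edge_magic (n k : nat) : Prop :=
  (exists e : rel 'I_n, [/\ simple_graph e, edge_magic e & #|edges e| = k]) /\
  (forall e : rel 'I_n, simple_graph e -> edge_magic e -> #|edges e| <= k).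

(* Let f label the n vertices injectively by [1, N] so that every
   label k in [1, N] missed by f equals s - f i - f j for two distinct vertices.
   Choosing one such pair for each missed k gives an edge-magic graph with magic
   sum s and exactly N - n edges.  A set of 7w + 4 integers made of three
   intervals of length w + 1 and two arithmetic progressions, of steps w + 1 and
   w, has pairwise sums filling an interval of length about 14 w^2; so n ~ 7w
   vertices carry about 2 n^2 / 7 edges.

   The magic condition says that, as multisets, the edge sums
   a_i + a_j together with the values s - a_i are exactly s - 1, ..., s - N.
   Testing it against y |-> cos (x y - t) shows that Re (e^{-it} Z(x)^2), where
   Z(x) = sum_j e^{i a_j x}, is within B = 2n + (n^2 - 2m) of twice a cosine sum
   over s - 1, ..., s - N.  For x = 2 pi / N that sum vanishes, so
   |Z(2 pi / N)|^4 <= 2 B^2; for x = pi / N and a well-chosen phase it equals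
   1 / sin (pi / 2N), so |Z(pi / N)|^2 >= 4N / pi - B; and Cauchy-Schwarz gives
   |Z(x)|^2 <= n (n + |Z(2x)|) / 2.  These are incompatible once m >= 0.488 n^2,
   a constant slightly below the one in the statement. *)

From Stdlib Require Import Reals Lra Psatz Machin.
From mathcomp Require Import all_boot Rstruct zify.
Set Implicit Arguments. Unset Strict Implicit. Unset Printing Implicit Defensive.

Section Labels.
Variables (n : nat) (e : rel 'I_n) (lv : 'I_n -> nat) (le : 'I_n -> 'I_n -> nat).

Definition edge_label (p : 'I_n * 'I_n) : nat := le p.1 p.2.

Definition labels : seq nat := image edge_label (edges e) ++ codom lv.

Lemma size_labels : size labels = (#|edges e| + n)%N.
Proof. by rewrite size_cat size_image size_codom card_ord. Qed.

Lemma edge_magic_labellingE s :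
  edge_magic_labelling e lv le s <->
  perm_eq labels (iota 1 (#|edges e| + n)) /\
  {in edges e, forall p, lv p.1 + lv p.2 + le p.1 p.2 = s}.
Proof.
rewrite /edge_magic_labelling; set N := (#|edges e| + n)%N.
have mem_iota1 k : (k \in iota 1 N) = (1 <= k <= N) by rewrite mem_iota; lia.
split=> [[lv_range [le_range [lv_inj [le_inj [lv_le [onto magic]]]]]] | [perm magic]].
  split=> //; have uniq_labels : uniq labels.
    rewrite cat_uniq; apply/and3P; split.
    - by apply/dinjectiveP => p q; apply: le_inj.
    - by apply/hasPn=> _ /codomP[v ->]; apply/imageP=> -[p pe]; exact: lv_le.
    - by apply/injectiveP.
  have sub : {subset labels <= iota 1 N}.
    move=> k; rewrite mem_cat mem_iota1 => /orP[/imageP[p pe ->]|/codomP[v ->]].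
      exact: le_range.
    exact: lv_range.
  have size_le : size (iota 1 N) <= size labels by rewrite size_iota size_labels.
  exact: uniq_perm (iota_uniq _ _) (uniq_min_size uniq_labels sub size_le).2.
have uniq_labels : uniq labels by rewrite (perm_uniq perm) iota_uniq.
have in_labels k : (k \in labels) = (1 <= k <= N) by rewrite (perm_mem perm).
move: uniq_labels; rewrite cat_uniq => /and3P[/dinjectiveP le_inj /hasPn lv_le /injectiveP lv_inj].
split; first by move=> v; rewrite -in_labels mem_cat codom_f orbT.
split; first by move=> p pe; rewrite -in_labels mem_cat (image_f edge_label pe).
split; first exact: lv_inj.
split; first exact: le_inj.
split; first by move=> v p pe lvp; move: (lv_le _ (codom_f lv v)); rewrite lvp image_f.
split=> // k; rewrite -in_labels mem_cat => /orP[/imageP[p pe ->]|/codomP[v ->]].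
  by right; exists p.
by left; exists v.
Qed.

End Labels.

Section SumCoverGraph.
Variables (n N s : nat) (f : 'I_n -> nat).
Hypothesis f_inj : injective f.
Hypothesis f_range : forall i, 1 <= f i <= N.
Hypothesis f_cover : forall k, 1 <= k <= N -> k \notin codom f ->
  exists i j, i != j /\ f i + f j + k = s.

Definition gap (k : nat) : bool := (1 <= k <= N) && (k \notin codom f).

Definition gap_edge (k : nat) : option ('I_n * 'I_n) :=
  [pick p : 'I_n * 'I_n | (p.1 < p.2) && (f p.1 + f p.2 + k == s)].

Definition pair_label (i j : 'I_n) : nat := s - (f i + f j).

Definition gap_graph : rel 'I_n := fun i j =>
  gap (pair_label i j) &&
  ((gap_edge (pair_label i j) == Some (i, j)) || (gap_edge (pair_label i j) == Some (j, i))).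

Lemma gap_edge_some k p : gap_edge k = Some p -> p.1 < p.2 /\ f p.1 + f p.2 + k = s.
Proof. by rewrite /gap_edge; case: pickP => // q /andP[q12 /eqP q_sum] [<-]. Qed.

Lemma gap_edge_exists k : gap k -> exists p, gap_edge k = Some p.
Proof.
case/andP=> k_range k_gap; have [i [j [ij ij_sum]]] := f_cover k_range k_gap.
rewrite /gap_edge; case: pickP => [p _|none]; first by exists p.
case: (ltngtP i j) => [lt_ij|lt_ji|/val_inj eq_ij]; last by rewrite eq_ij eqxx in ij.
- by move: (none (i, j)) => /=; rewrite lt_ij ij_sum eqxx.
- by move: (none (j, i)) => /=; rewrite lt_ji (addnC (f j)) ij_sum eqxx.
Qed.

Lemma pair_label_gap_edge k p : gap_edge k = Some p -> pair_label p.1 p.2 = k.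
Proof. by rewrite /pair_label => /gap_edge_some[_ <-]; rewrite addKn. Qed.

Lemma gap_edgesE :
  edges gap_graph = [set p | gap (pair_label p.1 p.2) && (gap_edge (pair_label p.1 p.2) == Some p)].
Proof.
apply/setP=> p; rewrite !inE /gap_graph -surjective_pairing; set k := pair_label p.1 p.2.
have [edge_p|_] := eqVneq (gap_edge k) (Some p).
  by have [lt12 _] := gap_edge_some edge_p; rewrite lt12 /= andbT.
rewrite andbF; case: eqP => [/gap_edge_some[/= lt21 _]|_]; last by rewrite !andbF.
by rewrite ltnNge (ltnW lt21).
Qed.

Lemma gap_graph_simple : simple_graph gap_graph.
Proof.
split=> [i j|i]; first by rewrite /gap_graph /pair_label addnC orbC.
by rewrite /gap_graph orbb; case: eqP => [/gap_edge_some[/= ]|]; rewrite ?ltnn ?andbF.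
Qed.

Lemma gap_labels_uniq : uniq (labels gap_graph f pair_label).
Proof.
rewrite cat_uniq; apply/and3P; split; last exact/injectiveP.
  apply/dinjectiveP=> p q; rewrite gap_edgesE !inE /edge_label.
  move=> /andP[_ /eqP p_edge] /andP[_ /eqP q_edge] pq.
  by move: p_edge; rewrite pq q_edge => -[].
apply/hasPn=> _ /codomP[v ->]; apply/imageP=> -[p].
rewrite gap_edgesE inE /edge_label => /andP[/andP[_ gap_p] _] fv.
by rewrite -fv codom_f in gap_p.
Qed.

Lemma mem_gap_labels k : (k \in labels gap_graph f pair_label) = (1 <= k <= N).
Proof.
rewrite mem_cat; apply/orP/idP => [[/imageP[p] | /codomP[v ->]] | k_range].
- by rewrite gap_edgesE inE => /andP[/andP[k_range _] _] ->.
- exact: f_range.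
case: (boolP (k \in codom f)) => [|k_gap]; first by right.
have gap_k : gap k by rewrite /gap k_range k_gap.
have [p p_edge] := gap_edge_exists gap_k.
left; apply/imageP; exists p; last by rewrite /edge_label (pair_label_gap_edge p_edge).
by rewrite gap_edgesE inE (pair_label_gap_edge p_edge) p_edge eqxx gap_k.
Qed.

Lemma gap_graph_labels : perm_eq (labels gap_graph f pair_label) (iota 1 N).
Proof.
apply: uniq_perm gap_labels_uniq (iota_uniq _ _) _ => k.
by rewrite mem_gap_labels mem_iota add1n ltnS.
Qed.

Lemma card_gap_edges : #|edges gap_graph| + n = N.
Proof. by rewrite -(size_labels _ f pair_label) (perm_size gap_graph_labels) size_iota. Qed.

Lemma sum_cover_edge_magic :
  exists e : rel 'I_n, [/\ simple_graph e, edge_magic e & #|edges e| + n = N].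
Proof.
exists gap_graph; split; [exact: gap_graph_simple | | exact: card_gap_edges].
exists f, pair_label, s; apply/edge_magic_labellingE; rewrite card_gap_edges.
split; first exact: gap_graph_labels.
move=> p; rewrite gap_edgesE inE => /andP[_ /eqP p_edge].
by have [_ sum_p] := gap_edge_some p_edge; rewrite (pair_label_gap_edge p_edge).
Qed.

End SumCoverGraph.

Section Basis.
Variable w : nat.
Hypothesis w_gt0 : 0 < w.

(* basis lists increasingly the 7w + 4 elements of D = [0, w], Q = (w + 1) [1, 3w],
   P = p0 + w [0, w], d2 + D and d3 + D.  The constants are chosen so that the
   sumsets D + Q, D + P, Q + P, (d2 + D) + Q, (d2 + D) + P, (d3 + D) + Q and
   (d3 + D) + P tile the interval (w, cover_top) in this order. *)
Definition p0 := 3 * w * w + 4 * w + 1.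
Definition d2 := 6 * w * w + 7 * w + 1.
Definition d3 := 10 * w * w + 11 * w + 1.
Definition cover_top := 14 * w * w + 16 * w + 2.

Definition basis (x : nat) : nat :=
  if x <= w then x
  else if x <= 4 * w then (w + 1) * (x - w)
  else if x <= 5 * w + 1 then p0 + w * (x - (4 * w + 1))
  else if x <= 6 * w + 2 then d2 + (x - (5 * w + 2))
  else d3 + (x - (6 * w + 3)).

Lemma basis_Q j : j < 3 * w -> basis (w + 1 + j) = (w + 1) * (j + 1).
Proof. by move=> lt_j; rewrite /basis; do ! case: ifP => ?; nia. Qed.

Lemma basis_P i : i <= w -> basis (4 * w + 1 + i) = p0 + w * i.
Proof. by move=> le_i; rewrite /basis; do ! case: ifP => ?; nia. Qed.

Definition D_starts := [:: 0; 5 * w + 2; 6 * w + 3].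

Lemma basis_D b r : b \in D_starts -> r <= w -> basis (b + r) = basis b + r.
Proof.
by rewrite !inE => /or3P[] /eqP-> le_r; rewrite /basis ?leq0n; do ! case: ifP => ?; nia.
Qed.

Lemma basis_mono : {mono basis : x y / x <= y}.
Proof.
apply/leq_mono/(homo_ltn ltn_trans) => x.
by rewrite /basis /d3 /d2 /p0; do ! case: ifP => ?; nia.
Qed.

Lemma basis_max x : x < 7 * w + 4 -> basis x <= d3 + w.
Proof.
have -> : d3 + w = basis (7 * w + 3) by rewrite /basis; do ! case: ifP => ?; lia.
by rewrite basis_mono; lia.
Qed.

Lemma split_DQ c t : c + w < t < c + p0 ->
  exists r j, [/\ r <= w, j < 3 * w & t = c + r + (w + 1) * (j + 1)].
Proof.
move=> lt_t; have := divn_eq (t - c) (w + 1); have := ltn_pmod (t - c) (leq_addl w 1).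
set q := (t - c) %/ (w + 1); set r := (t - c) %% (w + 1) => lt_r def_tc.
have q_gt0 : 0 < q by case: q def_tc => [|//]; lia.
have q_lt : q < 3 * w + 1.
  by rewrite -(ltn_pmul2r (leq_addl w 1)); rewrite /p0 in lt_t; nia.
by exists r, q.-1; rewrite prednK //; split; nia.
Qed.

Lemma split_DP c t : c + p0 <= t < c + p0 + w * (w + 1) ->
  exists r i, [/\ r < w, i <= w & t = c + r + (p0 + w * i)].
Proof.
move=> le_t; have := divn_eq (t - c - p0) w; have := ltn_pmod (t - c - p0) w_gt0.
set q := (t - c - p0) %/ w; set r := (t - c - p0) %% w => lt_r def_t.
have q_le : q <= w by rewrite -ltnS -(ltn_pmul2r w_gt0); nia.
by exists r, q; split; nia.
Qed.

Lemma split_QP t : p0 + w * (w + 1) <= t < 2 * p0 ->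
  exists j i, [/\ j < 3 * w, i <= w & t = (w + 1) * (j + 1) + (p0 + w * i)].
Proof.
rewrite /p0 => bounds_t; set u := t - (w + 1) - (3 * w * w + 4 * w + 1).
have [u_ge u_lt] : w * w <= u + 1 /\ u < 3 * w * w + 3 * w by lia.
have := divn_eq u w; have := ltn_pmod u w_gt0.
set q := u %/ w; set r := u %% w => lt_r def_u.
have r_le_q : r <= q.
  rewrite leqNgt; apply/negP => lt_qr.
  have : (q + 2) * w <= w * w by rewrite leq_mul2r; lia.
  lia.
have := divn_eq (q - r) (w + 1); have := ltn_pmod (q - r) (leq_addl w 1).
set k := (q - r) %/ (w + 1); set i := (q - r) %% (w + 1) => lt_i def_qr.
have k_le : k <= 2.
  have q_lt : q < 3 * (w + 1) by rewrite -(ltn_pmul2r w_gt0); lia.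
  by rewrite -ltnS -(ltn_pmul2r (leq_addl w 1)); lia.
exists (r + w * k), i; split; last first.
- have def_q : q = k * (w + 1) + i + r by lia.
  have def_t : t = u + (w + 1) + (3 * w * w + 4 * w + 1) by lia.
  by rewrite def_t def_u def_q; nia.
- lia.
- have : w * k <= w * 2 by rewrite leq_mul2l k_le orbT.
  lia.
Qed.

Definition covered (t : nat) : Prop :=
  exists x y, [/\ x != y, x < 7 * w + 4, y < 7 * w + 4 & basis x + basis y = t].

Lemma covered_D b t : b \in D_starts ->
  basis b + w < t < basis b + p0 + w * (w + 1) -> covered t.
Proof.
move=> Db bounds_t; have D_lt r : r <= w -> (b + r < w + 1) || (5 * w + 1 < b + r < 7 * w + 4).
  by move: Db; rewrite !inE => /or3P[] /eqP-> le_r; lia.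
have [lt_t|ge_t] := ltnP t (basis b + p0).
  have [r [j [le_r lt_j ->]]] := split_DQ (c := basis b) (t := t) (ltac:(lia)).
  exists (b + r), (w + 1 + j); rewrite basis_D // basis_Q //; have := D_lt r le_r.
  by split; [apply/eqP | | | ]; lia.
have [r [i [lt_r le_i ->]]] := split_DP (c := basis b) (t := t) (ltac:(lia)).
exists (b + r), (4 * w + 1 + i); rewrite basis_D ?basis_P //; last exact: ltnW.
by have := D_lt r (ltnW lt_r); split; [apply/eqP | | | ]; lia.
Qed.

Lemma covered_QP t : p0 + w * (w + 1) <= t < 2 * p0 -> covered t.
Proof.
move=> /split_QP[j [i [lt_j le_i ->]]].
by exists (w + 1 + j), (4 * w + 1 + i); rewrite basis_Q ?basis_P //; split; [apply/eqP | | | ]; lia.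
Qed.

Lemma covered_interval t : w < t < cover_top -> covered t.
Proof.
move=> bounds_t.
have [basis_D1 basis_D2 basis_D3] :
    [/\ basis 0 = 0, basis (5 * w + 2) = d2 & basis (6 * w + 3) = d3].
  by split; rewrite /basis ?leq0n //; do ! case: ifP => ?; lia.
have [tile2 tile3 tile4] : [/\ 2 * p0 = d2 + w + 1, d2 + p0 + w * (w + 1) = d3 + w + 1
                          & d3 + p0 + w * (w + 1) = cover_top].
  by rewrite /p0 /d2 /d3 /cover_top; split; nia.
have [lt1|ge1] := ltnP t (p0 + w * (w + 1)).
  by apply: (@covered_D 0); rewrite ?basis_D1 ?inE ?eqxx //; lia.
have [lt2|ge2] := ltnP t (2 * p0); first by apply: covered_QP; rewrite ge1.
have [lt3|ge3] := ltnP t (d2 + p0 + w * (w + 1)).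
  by apply: (@covered_D (5 * w + 2)); rewrite ?basis_D2 ?inE ?eqxx ?orbT //; lia.
by apply: (@covered_D (6 * w + 3)); rewrite ?basis_D3 ?inE ?eqxx ?orbT //; lia.
Qed.

End Basis.

Lemma basis_graph w n : 0 < w -> 7 * w + 4 <= n ->
  exists e : rel 'I_n, [/\ simple_graph e, edge_magic e & #|edges e| + (8 * w + 5) = cover_top w].
Proof.
move=> w_gt0 le_n; set n0 := 7 * w + 4; set N0 := cover_top w - w - 1.
have basis_lt x : x < n0 -> basis w x < N0.
  by move/(basis_max w_gt0); rewrite /N0 /cover_top /d3; nia.
pose f (i : 'I_n) := if i < n0 then basis w i + 1 else i - n0 + N0 + 1.
have f_inj : injective f.
  move=> i j; rewrite /f; case: ifP => lt_i; case: ifP => lt_j; move=> fij; apply: ord_inj.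
  - by apply: (incn_inj (basis_mono w_gt0)); apply: (addIn fij).
  - by have := basis_lt _ lt_i; lia.
  - by have := basis_lt _ lt_j; lia.
  - lia.
have f_range i : 1 <= f i <= N0 + (n - n0).
  by rewrite /f; case: ifP => lt_i; [have := basis_lt _ lt_i | have := ltn_ord i]; lia.
have f_cover k : 1 <= k <= N0 + (n - n0) -> k \notin codom f ->
    exists i j, i != j /\ f i + f j + k = cover_top w + 2.
  move=> k_range k_gap; have [lt_N0|le_N0] := ltnP N0 k.
    have lt_v : k - N0 - 1 + n0 < n by lia.
    case/negP: k_gap; apply/codomP; exists (Ordinal lt_v).
    by rewrite /f /= ifN; lia.
  have [x [y [xy lt_x lt_y sum_xy]]] : covered w (cover_top w - k).
    by apply: covered_interval; rewrite /N0 in le_N0; lia.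
  exists (Ordinal (leq_trans lt_x le_n)), (Ordinal (leq_trans lt_y le_n)).
  by rewrite /f /= lt_x lt_y; split; [|lia].
have [e [simple_e magic_e card_e]] := sum_cover_edge_magic f_inj f_range f_cover.
by exists e; split=> //; rewrite /N0 in card_e; lia.
Qed.

Lemma lower_bound_nat n : 11 <= n ->
  exists e : rel 'I_n, [/\ simple_graph e, edge_magic e & 2 * n * n <= 7 * #|edges e| + 35 * n].
Proof.
move=> n_ge; set w := (n - 4) %/ 7.
have [w_lo w_hi] : 7 * w + 4 <= n /\ n < 7 * w + 11.
  by have := divn_eq (n - 4) 7; have := ltn_pmod (n - 4) (isT : 0 < 7); lia.
have [e [simple_e magic_e card_e]] := basis_graph (n := n) (ltac:(lia) : 0 < w) w_lo.
by exists e; split=> //; rewrite /cover_top in card_e; nia.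
Qed.

Open Scope R_scope.

Section RealSums.
Variable I : finType.

Lemma Rsum_card (A : {pred I}) : \big[Rplus/0]_(i in A) 1 = INR #|A|.
Proof. by rewrite -sum1_card (big_morph INR plus_INR (erefl (INR 0))). Qed.

Lemma Rsum_const (c : R) : \big[Rplus/0]_(i : I) c = INR #|I| * c.
Proof. by rewrite -Rsum_card big_distrl /=; apply: eq_bigr => i _; rewrite Rmult_1_l. Qed.

Lemma Rsum_bounded (r : seq I) (P : pred I) (F : I -> R) : (forall i, -1 <= F i <= 1) ->
  - (\big[Rplus/0]_(i <- r | P i) 1) <= \big[Rplus/0]_(i <- r | P i) F i <=
  \big[Rplus/0]_(i <- r | P i) 1.
Proof.
move=> F_bounded; elim/big_rec2: _ => [|i x y _ [lo hi]]; first lra.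
by have := F_bounded i; lra.
Qed.

Lemma Rsum_ge0 (r : seq I) (P : pred I) (F : I -> R) : (forall i, 0 <= F i) ->
  0 <= \big[Rplus/0]_(i <- r | P i) F i.
Proof. by move=> F_ge0; elim/big_rec: _ => [|i x _ x_ge0]; [lra | have := F_ge0 i; lra]. Qed.

Lemma Rsum_mul_sum (c : R) (F G : I -> R) :
  \big[Rplus/0]_i \big[Rplus/0]_j (c * (F i * G j)) =
  c * (\big[Rplus/0]_i F i * \big[Rplus/0]_j G j).
Proof.
rewrite big_distrlr big_distrr /=; apply: eq_bigr => i _.
by rewrite big_distrr /=; apply: eq_bigr => j _.
Qed.

End RealSums.

Lemma Rsum_Cauchy_Schwarz (n : nat) (v : 'I_n -> R) :
  \big[Rplus/0]_i v i * \big[Rplus/0]_i v i <= INR n * \big[Rplus/0]_i (v i * v i).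
Proof.
case: n v => [|n] v; first by rewrite !big_ord0; lra.
set V := \big[Rplus/0]_i v i; set Q := \big[Rplus/0]_i (v i * v i).
have n_pos : 0 < INR n.+1 by apply/lt_0_INR/ltP.
have sq_ge0 : 0 <= \big[Rplus/0]_i ((INR n.+1 * v i - V) * (INR n.+1 * v i - V)).
  by apply: Rsum_ge0 => i; apply: Rle_0_sqr.
have expand : \big[Rplus/0]_i ((INR n.+1 * v i - V) * (INR n.+1 * v i - V)) =
          INR n.+1 * (INR n.+1 * Q - V * V).
  rewrite (eq_bigr (fun i => INR n.+1 * INR n.+1 * (v i * v i) +
                             (- 2 * INR n.+1 * V) * v i + V * V)); last by move=> i _; ring.
  by rewrite !big_split /= Rsum_const card_ord -!big_distrr /= -/Q -/V; ring.
rewrite expand in sq_ge0; nra.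
Qed.

Section PairSums.
Variables (n : nat) (e : rel 'I_n).
Hypotheses (e_sym : symmetric e) (e_irr : irreflexive e).

Lemma Rsum_pairs_split (F : 'I_n * 'I_n -> R) : (forall p, F (p.2, p.1) = F p) ->
  \big[Rplus/0]_p F p =
  2 * \big[Rplus/0]_(p in edges e) F p + \big[Rplus/0]_(p | ~~ e p.1 p.2) F p.
Proof.
move=> F_sym; rewrite (bigID (fun p => e p.1 p.2)) /=; congr (_ + _).
rewrite (bigID (fun p : 'I_n * 'I_n => p.1 < p.2)%N) /=.
have swap_inj : injective (fun p : 'I_n * 'I_n => (p.2, p.1)) by move=> [? ?] [? ?] [-> ->].
rewrite [X in _ + X](reindex_inj swap_inj) /=.
have edgesP p : (p \in edges e) = e p.1 p.2 && (p.1 < p.2)%N by rewrite inE andbC.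
have swapP p : e p.2 p.1 && ~~ (p.2 < p.1)%N = e p.1 p.2 && (p.1 < p.2)%N.
  rewrite e_sym -leqNgt; case: (boolP (e p.1 p.2)) => //= edge_p.
  by rewrite leq_eqVlt; case: eqP => // /val_inj eq_p; rewrite eq_p e_irr in edge_p.
rewrite (eq_bigl _ _ swapP) (eq_bigl _ _ edgesP).
by rewrite RIneq.double; congr (_ + _); apply: eq_bigr => p _; rewrite F_sym.
Qed.

Lemma Rsum_non_edges :
  \big[Rplus/0]_(p | ~~ e p.1 p.2) 1 = INR n * INR n - 2 * INR #|edges e|.
Proof.
have := Rsum_pairs_split (F := fun _ => 1) (fun _ => erefl).
rewrite Rsum_const card_prod card_ord mult_INR Rmult_1_r Rsum_card; lra.
Qed.

Variables (a : 'I_n -> R) (s : R) (N : nat).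
Hypothesis magic : forall h : R -> R,
  \big[Rplus/0]_(p in edges e) h (a p.1 + a p.2) =
  \big[Rplus/0]_(k < N) h (s - INR k.+1) - \big[Rplus/0]_i h (s - a i).

Definition defect_bound := 2 * INR n + (INR n * INR n - 2 * INR #|edges e|).

Lemma defect_bound_ge0 : 0 <= defect_bound.
Proof.
have := Rsum_ge0 (index_enum _) (fun p : 'I_n * 'I_n => ~~ e p.1 p.2) (fun _ => Rle_0_1).
by rewrite Rsum_non_edges /defect_bound; have := pos_INR n; lra.
Qed.

Lemma pair_sum_defect (h : R -> R) : (forall y, -1 <= h y <= 1) ->
  - defect_bound <= \big[Rplus/0]_i \big[Rplus/0]_j h (a i + a j) -
                    2 * \big[Rplus/0]_(k < N) h (s - INR k.+1) <= defect_bound.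
Proof.
move=> h_bounded; rewrite pair_big.
rewrite (Rsum_pairs_split (F := fun p => h (a p.1 + a p.2))) => [|p]; last by rewrite Rplus_comm.
rewrite magic.
set V := \big[Rplus/0]_i h (s - a i).
set W := \big[Rplus/0]_(p | ~~ e p.1 p.2) h (a p.1 + a p.2).
have V_bounds : - INR n <= V <= INR n.
  have := Rsum_bounded (index_enum 'I_n) xpredT (fun i => h_bounded (s - a i)).
  by rewrite Rsum_const card_ord Rmult_1_r.
have W_bounds : - (INR n * INR n - 2 * INR #|edges e|) <= W <= INR n * INR n - 2 * INR #|edges e|.
  by rewrite -Rsum_non_edges; apply: Rsum_bounded.
rewrite /defect_bound; lra.
Qed.

End PairSums.

Section TrigSums.
Variables (n : nat) (a : 'I_n -> R).

Definition Csum (x : R) : R := \big[Rplus/0]_i cos (a i * x).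
Definition Ssum (x : R) : R := \big[Rplus/0]_i sin (a i * x).

(* The right-hand side is Re (e^{-it} Z(x)^2), where Z(x) = sum_j e^{i a_j x}. *)
Lemma pair_cos_sum (x t : R) :
  \big[Rplus/0]_i \big[Rplus/0]_j cos ((a i + a j) * x - t) =
  cos t * (Csum x * Csum x - Ssum x * Ssum x) + sin t * (2 * (Csum x * Ssum x)).
Proof.
transitivity (\big[Rplus/0]_i \big[Rplus/0]_j
  (cos t * (cos (a i * x) * cos (a j * x)) + - cos t * (sin (a i * x) * sin (a j * x)) +
   sin t * (cos (a i * x) * sin (a j * x)) + sin t * (sin (a i * x) * cos (a j * x)))).
  apply: eq_bigr => i _; apply: eq_bigr => j _.
  by rewrite cos_minus Rmult_plus_distr_r cos_plus sin_plus; ring.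
under eq_bigr do rewrite !big_split /=.
by rewrite !big_split /= !Rsum_mul_sum -/(Csum x) -/(Ssum x); ring.
Qed.

(* Cauchy-Schwarz for v_j = Re (conj (Z(x)) e^{i a_j x}), whose sum is |Z(x)|^2. *)
Lemma Csum_Ssum_Cauchy_Schwarz (x : R) :
  let C := Csum x in let S := Ssum x in
  (C * C + S * S) * (C * C + S * S) <=
  INR n * ((C * C + S * S) * INR n / 2 +
           ((C * C - S * S) * Csum (2 * x) + 2 * (C * S) * Ssum (2 * x)) / 2).
Proof.
move=> C S; have := Rsum_Cauchy_Schwarz (fun i => C * cos (a i * x) + S * sin (a i * x)).
have -> : \big[Rplus/0]_i (C * cos (a i * x) + S * sin (a i * x)) = C * C + S * S.
  by rewrite big_split /= -!big_distrr.
congr (_ <= INR n * _).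
rewrite (eq_bigr (fun i => (C * C + S * S) / 2 * 1 + (C * C - S * S) / 2 * cos (a i * (2 * x))
                           + C * S * sin (a i * (2 * x)))); last first.
  move=> i _; have unit := sin2_cos2 (a i * x); rewrite /Rsqr in unit.
  have -> : a i * (2 * x) = 2 * (a i * x) by ring.
  by rewrite cos_2a sin_2a -unit; field.
rewrite !big_split /= -!big_distrr /= Rsum_const card_ord.
by rewrite -/(Csum (2 * x)) -/(Ssum (2 * x)); field.
Qed.

End TrigSums.

Lemma cos_arith_sum (t x : R) (N : nat) :
  2 * sin (x / 2) * \big[Rplus/0]_(k < N) cos (t - INR k.+1 * x) =
  sin (t - x / 2) - sin (t - INR N * x - x / 2).
Proof.
elim: N => [|N IH]; first by rewrite big_ord0 /= Rmult_0_l Rminus_0_r; ring.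
rewrite big_ord_recr Rmult_plus_distr_l IH; set u := t - INR N.+1 * x.
have -> : t - INR N * x - x / 2 = u + x / 2 by rewrite /u S_INR; field.
by rewrite (sin_plus u) (sin_minus u); ring.
Qed.

Lemma cos_sum_full_period (t : R) (N : nat) : (2 <= N)%N ->
  \big[Rplus/0]_(k < N) cos (t - INR k.+1 * (2 * (PI / INR N))) = 0.
Proof.
move=> N_ge2; have N_gt : 2 <= INR N by apply/(le_INR 2)/leP.
set x := 2 * (PI / INR N).
have sin_pos : 0 < sin (x / 2).
  have -> : x / 2 = PI / INR N by rewrite /x; field; lra.
  have pi_pos := PI_RGT_0; have inv_le : / INR N <= / 2 by apply: Rinv_le_contravar; lra.
  apply: sin_gt_0; rewrite /Rdiv; last nra.
  by apply: Rmult_lt_0_compat; [|apply: Rinv_0_lt_compat]; lra.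
have := cos_arith_sum t x N.
have -> : t - INR N * x - x / 2 = (t - x / 2) - 2 * PI by rewrite /x; field; lra.
rewrite (sin_minus (t - x / 2)) sin_2PI cos_2PI => sum_eq.
apply: (Rmult_eq_reg_l (2 * sin (x / 2))); last lra.
by rewrite sum_eq; ring.
Qed.

Lemma cos_sum_half_period (N : nat) : (1 <= N)%N ->
  2 * INR N / PI <=
  \big[Rplus/0]_(k < N) cos ((INR N + 1) / 2 * (PI / INR N) - INR k.+1 * (PI / INR N)).
Proof.
move=> N_ge1; have N_ge : 1 <= INR N by apply/(le_INR 1)/leP.
have pi_pos := PI_RGT_0; set x := PI / INR N; set T := \big[Rplus/0]_(k < N) _.
have x_pos : 0 < x by apply: Rdiv_lt_0_compat; lra.
have [sin_pos sin_lt] : 0 < sin (x / 2) /\ sin (x / 2) < x / 2.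
  split; last by apply: sin_lt_x; lra.
  apply: sin_gt_0; first lra.
  have : x <= PI by rewrite /x /Rdiv -[X in _ <= X]Rmult_1_r; apply: Rmult_le_compat_l;
    [lra | rewrite -Rinv_1; apply: Rinv_le_contravar; lra].
  lra.
have := cos_arith_sum ((INR N + 1) / 2 * x) x N.
have -> : (INR N + 1) / 2 * x - x / 2 = PI / 2 by rewrite /x; field; lra.
have -> : (INR N + 1) / 2 * x - INR N * x - x / 2 = - (PI / 2) by rewrite /x; field; lra.
rewrite sin_neg sin_PI2 -/T => sum_eq.
have -> : 2 * INR N / PI = 2 / x by rewrite /x; field; lra.
apply: (Rmult_le_reg_r (x / 2)); first lra.
have : T * sin (x / 2) = 1 by lra.
have : 0 < T by nra.
move=> T_pos T_eq; have := Rmult_lt_compat_l T _ _ T_pos sin_lt.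
have -> : 2 / x * (x / 2) = 1 by field; lra.
lra.
Qed.

Lemma magic_identity n (e : rel 'I_n) lv le s : edge_magic_labelling e lv le s ->
  forall h : R -> R,
  \big[Rplus/0]_(p in edges e) h (INR (lv p.1) + INR (lv p.2)) =
  \big[Rplus/0]_(k < #|edges e| + n) h (INR s - INR k.+1) -
  \big[Rplus/0]_i h (INR s - INR (lv i)).
Proof.
case/edge_magic_labellingE=> perm magic h.
have edge_term p : p \in edges e ->
    h (INR (lv p.1) + INR (lv p.2)) = h (INR s - INR (edge_label le p)).
  by move/magic <-; rewrite !plus_INR /edge_label /Rminus Rplus_assoc Rplus_opp_r Rplus_0_r.
have := perm_big (x := 0) (op := Rplus) (P := xpredT) (F := fun k => h (INR s - INR k)) _ perm.
rewrite big_cat /image_mem !big_map !big_enum -[1%N]addn0 iotaDl big_map.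
rewrite -{1}[(#|edges e| + n)%N]subn0 big_mkord => sum_labels.
apply: (Rplus_eq_reg_r (\big[Rplus/0]_i h (INR s - INR (lv i)))).
by rewrite /Rminus Rplus_assoc Rplus_opp_l Rplus_0_r (eq_bigr _ edge_term).
Qed.

Lemma dot2_le_sqrt (u w c d : R) : u * c + w * d <= sqrt (u * u + w * w) * sqrt (c * c + d * d).
Proof.
rewrite -sqrt_mult; try nra.
have [neg|pos] := Rle_lt_dec (u * c + w * d) 0.
  by have := sqrt_pos ((u * u + w * w) * (c * c + d * d)); lra.
rewrite -[X in X <= _]sqrt_square; last lra.
by apply: sqrt_le_1_alt; have := Rle_0_sqr (u * d - w * c); rewrite /Rsqr; nra.
Qed.

Lemma PI_le : PI <= 31416 / 10000.
Proof.
have [_ upper] := PI_2_3_7_ineq 2.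
by move: upper; rewrite /tg_alt /PI_2_3_7_tg /Ratan_seq /=; lra.
Qed.

(* Since pi <= 3.1416, the hypotheses give rho >= 0.5973 n^2 - 2n, hence
   Y >= 0.1946 n - 4, whereas Y^4 <= 2 B^2 with B <= 0.024 n^2 + 2n. *)
Lemma dense_magic_absurd (n m rho Y : R) :
  let B := 2 * n + (n * n - 2 * m) in
  2000 <= n -> 488 / 1000 * (n * n) <= m -> 0 <= Y -> 0 <= B ->
  4 * (m + n) / PI - B <= rho -> rho <= n * (n + Y) / 2 ->
  Y * Y * (Y * Y) <= 2 * (B * B) -> False.
Proof.
move=> B n_ge m_ge Y_ge0 B_ge0 rho_ge rho_le Y4_le.
have rho_ge' : 5973 / 10000 * (n * n) - 2 * n <= rho.
  have pi_le := PI_le; have pi_pos := PI_RGT_0.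
  have : 4 * (m + n) / (31416 / 10000) <= 4 * (m + n) / PI.
    by apply: Rmult_le_compat_l; [nra | apply: Rinv_le_contravar].
  rewrite /B in rho_ge; nra.
have B_le : B <= 24 / 1000 * (n * n) + 2 * n by rewrite /B; nra.
set u := 1946 / 10000 * n - 4.
have u_ge0 : 0 <= u by rewrite /u; lra.
have Y_ge : u <= Y by rewrite /u; nra.
have u2_ge : 142 / 100 * (24 / 1000 * (n * n) + 2 * n) <= u * u by rewrite /u; nra.
have Y2_ge : u * u <= Y * Y by nra.
have B2_le : B * B <= (24 / 1000 * (n * n) + 2 * n) * (24 / 1000 * (n * n) + 2 * n) by nra.
nra.
Qed.

Section UpperBound.
Variables (n : nat) (e : rel 'I_n) (a : 'I_n -> R) (s : R).
Hypotheses (e_sym : symmetric e) (e_irr : irreflexive e) (n_ge2 : (2 <= n)%N).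
Let N := (#|edges e| + n)%N.
Hypothesis magic : forall h : R -> R,
  \big[Rplus/0]_(p in edges e) h (a p.1 + a p.2) =
  \big[Rplus/0]_(k < N) h (s - INR k.+1) - \big[Rplus/0]_i h (s - a i).
Let B := defect_bound e.

Lemma cos_pair_defect (x t : R) :
  - B <= cos t * (Csum a x * Csum a x - Ssum a x * Ssum a x) +
          sin t * (2 * (Csum a x * Ssum a x)) -
          2 * \big[Rplus/0]_(k < N) cos ((s * x - t) - INR k.+1 * x) <= B.
Proof.
have := pair_sum_defect e_sym e_irr magic (fun y => COS_bound (y * x - t)).
rewrite pair_cos_sum.
have shift (k : nat) : (s - INR k.+1) * x - t = s * x - t - INR k.+1 * x by ring.
by under eq_bigr do rewrite shift.
Qed.

Let x1 := PI / INR N.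
Let C1 := Csum a x1.
Let S1 := Ssum a x1.
Let C2 := Csum a (2 * x1).
Let S2 := Ssum a (2 * x1).

Lemma N_ge2 : (2 <= N)%N.
Proof. by rewrite /N; lia. Qed.

Lemma second_moment_bound : (C2 * C2 + S2 * S2) * (C2 * C2 + S2 * S2) <= 2 * (B * B).
Proof.
have := cos_pair_defect (2 * x1) 0; have := cos_pair_defect (2 * x1) (PI / 2).
rewrite !cos_sum_full_period ?N_ge2 // cos_0 sin_0 cos_PI2 sin_PI2 -/C2 -/S2.
nra.
Qed.

Lemma first_moment_lower : 4 * INR N / PI - B <= C1 * C1 + S1 * S1.
Proof.
set t := s * x1 - (INR N + 1) / 2 * x1.
have := cos_pair_defect x1 t; rewrite -/C1 -/S1.
have -> : s * x1 - t = (INR N + 1) / 2 * x1 by rewrite /t; ring.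
have := cos_sum_half_period (ltnW N_ge2); rewrite -/x1.
have := dot2_le_sqrt (C1 * C1 - S1 * S1) (2 * (C1 * S1)) (cos t) (sin t).
have -> : (C1 * C1 - S1 * S1) * (C1 * C1 - S1 * S1) + 2 * (C1 * S1) * (2 * (C1 * S1)) =
          (C1 * C1 + S1 * S1) * (C1 * C1 + S1 * S1) by ring.
rewrite sqrt_square; last nra.
have := sin2_cos2 t; rewrite /Rsqr Rplus_comm => ->; rewrite sqrt_1.
have -> : 4 * INR N / PI = 2 * (2 * INR N / PI) by field; exact: PI_neq0.
lra.
Qed.

Lemma first_moment_upper :
  C1 * C1 + S1 * S1 <= INR n * (INR n + sqrt (C2 * C2 + S2 * S2)) / 2.
Proof.
have := Csum_Ssum_Cauchy_Schwarz a x1; rewrite /= -/C1 -/S1 -/C2 -/S2.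
have := dot2_le_sqrt (C1 * C1 - S1 * S1) (2 * (C1 * S1)) C2 S2.
have -> : (C1 * C1 - S1 * S1) * (C1 * C1 - S1 * S1) + 2 * (C1 * S1) * (2 * (C1 * S1)) =
          (C1 * C1 + S1 * S1) * (C1 * C1 + S1 * S1) by ring.
rewrite sqrt_square; last nra.
set rho := C1 * C1 + S1 * S1; set Y := sqrt _ => dot CS.
have [rho_ge0 Y_ge0 n_ge0] : [/\ 0 <= rho, 0 <= Y & 0 <= INR n].
  by split; [rewrite /rho; nra | apply: sqrt_pos | apply: pos_INR].
have [->|rho_pos] := Req_dec rho 0; first nra.
apply: (Rmult_le_reg_l rho); nra.
Qed.

Theorem magic_edges_lt : (2000 <= n)%N -> INR #|edges e| < 488 / 1000 * (INR n * INR n).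
Proof.
move=> n_ge; apply: Rnot_le_lt => dense.
have n_ge' : 2000 <= INR n by rewrite INR_IZR_INZ; apply: IZR_le; lia.
have Y_sq : sqrt (C2 * C2 + S2 * S2) * sqrt (C2 * C2 + S2 * S2) = C2 * C2 + S2 * S2.
  by apply: sqrt_sqrt; nra.
have N_eq : INR N = INR #|edges e| + INR n by rewrite /N plus_INR.
apply: (dense_magic_absurd (rho := C1 * C1 + S1 * S1) (Y := sqrt (C2 * C2 + S2 * S2)) n_ge' dense).
- exact: sqrt_pos.
- exact: defect_bound_ge0.
- by have := first_moment_lower; rewrite N_eq.
- exact: first_moment_upper.
- by rewrite Y_sq; exact: second_moment_bound.
Qed.

End UpperBound.

Lemma edge_magic_card_edges_lt n (e : rel 'I_n) : (2000 <= n)%N -> simple_graph e -> edge_magic e ->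
  INR #|edges e| < 488 / 1000 * (INR n * INR n).
Proof.
move=> n_ge [e_sym e_irr] [lv [le [s labelling]]].
apply: (magic_edges_lt (a := fun i => INR (lv i)) (s := INR s) e_sym e_irr) => //.
  by apply: leq_trans n_ge.
exact: magic_identity labelling.
Qed.

Lemma magic_constant_ge : 488 / 1000 <= 1 / 2 - 2 / (2 + (1 + 2 * sqrt 2) * PI) ^ 2.
Proof.
have sqrt2_ge : 14 / 10 <= sqrt 2.
  by rewrite -(sqrt_square (14 / 10)); [apply: sqrt_le_1_alt | ]; lra.
have pi_ge : 3 <= PI by have := PI2_3_2; lra.
set K := 2 + (1 + 2 * sqrt 2) * PI.
have K_ge : 134 / 10 <= K by rewrite /K; nra.
have : 2 / K ^ 2 <= 12 / 1000.
  apply: (Rmult_le_reg_r (K ^ 2)); first nra.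
  rewrite /Rdiv Rmult_assoc Rinv_l; nra.
lra.
Qed.

Theorem theorem1 (M : nat -> nat) (HM : forall n, is_max_edge_magic n (M n)) :
  (exists C : R, exists N0 : nat, forall n : nat, (N0 <= n)%coq_nat ->
      2 / 7 * INR n ^ 2 - C * INR n <= INR (M n)) /\
  (forall eps : R, 0 < eps -> exists N0 : nat, forall n : nat, (N0 <= n)%coq_nat ->
      INR (M n) <=
      (1 / 2 - 2 / (2 + (1 + 2 * sqrt 2) * PI) ^ 2 + eps) * INR n ^ 2).
Proof.
split.
  exists 5, 11%N => n /leP n_ge.
  have [e [simple_e magic_e dense_e]] := lower_bound_nat n_ge.
  have /leP le_M := (HM n).2 e simple_e magic_e.
  have := le_INR _ _ le_M; have := le_INR _ _ (elimT leP dense_e).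
  rewrite !plus_INR !mult_INR /=; lra.
move=> eps eps_pos; exists 2000%N => n /leP n_ge.
have [[e [simple_e magic_e <-]] _] := HM n.
have := edge_magic_card_edges_lt n_ge simple_e magic_e.
have := magic_constant_ge; have := pos_INR n; nra.
Qed.
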